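(* For any $k\in\mathbb{N}$, there exists a simple connected graph $G$ with at least one edge such that $src(G)-\max(\mathrm{diam}(G),\omega'(G))\geq k$.
   Context: An edge coloring of $G$ is any function $f:E(G)\to\{1,\dots,k\}$ (adjacent edges may share a color). A path is rainbow if its edges receive pairwise distinct colors. $src(G)$ is the minimum number of colors in an edge coloring such that every pair of distinct vertices is joined by a rainbow shortest path. For distinct $u_1,u_2\in V(G)$, an edge $e$ separates $u_1,u_2$ if $e$ lies on every shortest $(u_1,u_2)$-path. The auxiliary graph $H(G)$ has vertex set $E(G)$, with distinct $e_1,e_2$ adjacent iff some pair of distinct vertices is separated by both. $\omega'(G)$ is the clique number of $H(G)$; $\mathrm{diam}(G)$ is the diameter of $G$. *)

From mathcomp Require Import all_boot.
Set Implicit Arguments. Unset Strict Implicit. Unset Printing Implicit Defensive.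

Section StrongRainbow.
Variables (T : finType) (e : rel T).

Definition gedges : {set {set T}} :=
  [set A : {set T} | [exists x, exists y, e x y && (A == [set x; y])]].

Definition walk_of_len (n : nat) (u v : T) : bool :=
  [exists p : n.-tuple T, path e u p && (last u p == v)].

(* Graph distance (meaningful for connected graphs: then dist u v < #|T|). *)
Definition dist (u v : T) : nat := find (fun n => walk_of_len n u v) (iota 0 #|T|).

Definition diam : nat := \max_(u : T) \max_(v : T) dist u v.

Definition path_edges (u : T) (p : seq T) : seq {set T} :=
  pairmap (fun x y => [set x; y]) u p.

Definition shortest_path (u v : T) (p : seq T) : bool :=
  [&& path e u p, last u p == v & size p == dist u v].

(* f (restricted to the edges) is a strong rainbow colouring with colours
   from a set of n colours: every pair of distinct vertices is joined by a
   rainbow shortest path. *)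
Definition src_coloring (n : nat) (f : {ffun {set T} -> 'I_n}) : bool :=
  [forall u, forall v, (u != v) ==>
     [exists p : (dist u v).-tuple T,
        shortest_path u v p && uniq (map f (path_edges u p))]].

Definition src_colorable (n : nat) : bool :=
  [exists f : {ffun {set T} -> 'I_n}, src_coloring f].

(* Strong rainbow connection number: least n admitting such a colouring
   (for connected graphs, n = #|E(G)| always works, so this is the minimum). *)
Definition src : nat := find src_colorable (iota 0 #|gedges|.+1).

Definition separates (A : {set T}) (u1 u2 : T) : bool :=
  [forall p : (dist u1 u2).-tuple T,
     shortest_path u1 u2 p ==> (A \in path_edges u1 p)].

Definition H_adj (A B : {set T}) : bool :=
  [&& A \in gedges, B \in gedges, A != B &
      [exists u1, exists u2, (u1 != u2) && separates A u1 u2 && separates B u1 u2]].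

Definition H_clique (C : {set {set T}}) : bool :=
  (C \subset gedges) &&
  [forall A in C, forall B in C, (A != B) ==> H_adj A B].

Definition omega' : nat := \max_(C : {set {set T}} | H_clique C) #|C|.

Definition simple_graph : Prop := symmetric e /\ irreflexive e.
Definition gconnected : Prop := forall u v : T, connect e u v.

End StrongRainbow.

From mathcomp Require Import all_boot.
From mathcomp Require Import zify.
Set Implicit Arguments. Unset Strict Implicit. Unset Printing Implicit Defensive.

(* The witness is the complete bipartite graph K_{2,b}. Its diameter is 2.
   An adjacent pair is joined by a single shortest path, its edge, while two
   vertices on the same side have two edge-disjoint shortest paths through
   the other side; so an edge separates only its own endpoints, H(G) has no
   edges and omega'(G) <= 1. Two right vertices i, j are joined only by paths
   i - a - j through a left vertex a, so in a strong rainbow colouring f the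
   colour pairs (f(0 i), f(1 i)) are pairwise distinct: b <= src(G)^2. *)

Lemma find_iota_leq (P : pred nat) (N d : nat) :
  P d -> d < N -> find P (iota 0 N) <= d.
Proof.
move=> Pd ltdN; rewrite leqNgt; apply/negP => /(before_find 0).
by rewrite nth_iota // add0n Pd.
Qed.

Lemma find_iota_geq (P : pred nat) (N d : nat) :
  (forall m, m < d -> ~~ P m) -> d <= N -> d <= find P (iota 0 N).
Proof.
move=> notP ledN; rewrite leqNgt; apply/negP => ltfd.
have ltfN : find P (iota 0 N) < N by apply: leq_trans ltfd ledN.
have hasP : has P (iota 0 N) by rewrite has_find size_iota.
by have := nth_find 0 hasP; rewrite nth_iota // add0n (negbTE (notP _ ltfd)).
Qed.

Section GraphFacts.
Variables (T : finType) (e : rel T).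

Lemma walk_of_len_path (u v : T) (s : seq T) :
  path e u s -> last u s = v -> walk_of_len e (size s) u v.
Proof. by move=> pth lst; apply/existsP; exists (in_tuple s); rewrite /= pth lst eqxx. Qed.

Lemma walk_of_len0 (u v : T) : walk_of_len e 0 u v -> u = v.
Proof. by case/existsP => -[[|x s] //= _] /eqP. Qed.

Lemma walk_of_len1 (u v : T) : walk_of_len e 1 u v -> e u v.
Proof. by case/existsP => -[[|x [|y s]] //= _] /andP[/andP[exy _] /eqP <-]. Qed.

Lemma dist_leq (u v : T) (d : nat) :
  walk_of_len e d u v -> d < #|T| -> dist e u v <= d.
Proof. exact: (@find_iota_leq (fun n => walk_of_len e n u v)). Qed.

Lemma dist_eq (u v : T) (d : nat) :
  walk_of_len e d u v -> d < #|T| ->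
  (forall m, m < d -> ~~ walk_of_len e m u v) -> dist e u v = d.
Proof.
move=> walk_d ltdT shorter; apply/eqP; rewrite eqn_leq dist_leq //.
exact: (@find_iota_geq (fun n => walk_of_len e n u v)) (ltnW ltdT).
Qed.

Lemma dist_adj (u v : T) : e u v -> u != v -> 1 < #|T| -> dist e u v = 1.
Proof.
move=> euv neq_uv lt1T; apply: dist_eq => //.
  by apply: (@walk_of_len_path u v [:: v]); rewrite /= ?euv.
by case=> // _; apply/negP => /walk_of_len0/eqP; rewrite (negbTE neq_uv).
Qed.

Lemma dist_common_nbr (u v w : T) :
  u != v -> ~~ e u v -> e u w -> e w v -> 2 < #|T| -> dist e u v = 2.
Proof.
move=> neq_uv nuv euw ewv lt2T; apply: dist_eq => //.
  by apply: (@walk_of_len_path u v [:: w; v]); rewrite /= ?euw ?ewv.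
case=> [_|[_|//]]; apply/negP; first by move/walk_of_len0/eqP; rewrite (negbTE neq_uv).
by move/walk_of_len1; rewrite (negbTE nuv).
Qed.

Lemma diam_leq (d : nat) : d < #|T| ->
  (forall u v, exists s, [&& path e u s, last u s == v & size s <= d]) ->
  diam e <= d.
Proof.
move=> ltdT short; apply/bigmax_leqP => u _; apply/bigmax_leqP => v _.
have [s /and3P[pth /eqP lst le_sd]] := short u v.
have ltsT : size s < #|T| by apply: leq_ltn_trans le_sd ltdT.
exact: leq_trans (dist_leq (walk_of_len_path pth lst) ltsT) le_sd.
Qed.

Lemma separates_shortest_path (A : {set T}) (u v : T) (s : seq T) :
  separates e A u v -> shortest_path e u v s -> A \in path_edges u s.
Proof.
move=> /forallP sepA sp; have sz : size s == dist e u v by case/and3P: sp.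
by have := sepA (Tuple sz); rewrite /= sp.
Qed.

Lemma separates_adj (A : {set T}) (u v : T) :
  e u v -> dist e u v = 1 -> separates e A u v -> A = [set u; v].
Proof.
move=> euv d1 sepA.
have sp : shortest_path e u v [:: v] by rewrite /shortest_path /= euv eqxx d1.
by have := separates_shortest_path sepA sp; rewrite inE => /eqP.
Qed.

Lemma separates_two_common_nbrs (A : {set T}) (u v w w' : T) :
  dist e u v = 2 -> e u w -> e w v -> e u w' -> e w' v ->
  w != u -> w != w' -> w != v -> ~~ separates e A u v.
Proof.
move=> d2 euw ewv euw' ew'v neq_wu neq_ww' neq_wv; apply/negP => sepA.
have sp : shortest_path e u v [:: w; v] by rewrite /shortest_path /= euw ewv eqxx d2.
have sp' : shortest_path e u v [:: w'; v] by rewrite /shortest_path /= euw' ew'v eqxx d2.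
have wA : w \in A.
  move: (separates_shortest_path sepA sp); rewrite !inE.
  by case/orP => /eqP ->; rewrite !inE eqxx ?orbT.
move: (separates_shortest_path sepA sp') wA; rewrite !inE.
by case/orP => /eqP ->; rewrite !inE ?(negbTE neq_wu) ?(negbTE neq_ww') ?(negbTE neq_wv).
Qed.

Lemma omega'_leq1 : (forall A B, ~~ H_adj e A B) -> omega' e <= 1.
Proof.
move=> noH; apply/bigmax_leqP => C /andP[_ /forallP clqC]; rewrite leqNgt.
apply/card_gt1P => -[A [B [AC BC neqAB]]].
move: (clqC A); rewrite AC => /forallP/(_ B).
by rewrite BC neqAB (negbTE (noH A B)).
Qed.

Lemma src_colorableP (n : nat) :
  src_colorable e n -> exists f : {ffun {set T} -> 'I_n},
    forall u v, u != v ->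
    exists s, shortest_path e u v s && uniq (map f (path_edges u s)).
Proof.
case/existsP => f /forallP colf; exists f => u v neq_uv.
by case/existsP: (implyP (forallP (colf u) v) neq_uv) => p Hp; exists p.
Qed.

Lemma src_geq (d : nat) :
  (forall m, m < d -> ~~ src_colorable e m) -> d <= #|gedges e|.+1 -> d <= src e.
Proof. exact: find_iota_geq. Qed.

End GraphFacts.

Section CompleteBipartite.
Variable b : nat.

Definition K2_vertex : finType := (bool + 'I_b.+2)%type.

Definition K2_adj : rel K2_vertex := fun u v =>
  match u, v with inl _, inr _ | inr _, inl _ => true | _, _ => false end.

Let r0 : 'I_b.+2 := ord0.
Let r1 : 'I_b.+2 := ord_max.

Lemma card_K2_vertex : #|K2_vertex| = b.+4.
Proof. by rewrite card_sum card_bool card_ord. Qed.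

Lemma K2_simple : simple_graph K2_adj.
Proof. by split; [case=> [a|i] [a'|j] | case]. Qed.

Lemma K2_short_walk (u v : K2_vertex) :
  exists s, [&& path K2_adj u s, last u s == v & size s <= 2].
Proof.
case: u v => [a|i] [a'|j].
- by exists [:: inr r0; inl a']; rewrite /= eqxx.
- by exists [:: inr j]; rewrite /= eqxx.
- by exists [:: inl a']; rewrite /= eqxx.
- by exists [:: inl false; inr j]; rewrite /= eqxx.
Qed.

Lemma K2_connected : gconnected K2_adj.
Proof.
move=> u v; have [s /and3P[pth /eqP lst _]] := K2_short_walk u v.
by apply/connectP; exists s.
Qed.

Lemma K2_diam : diam K2_adj <= 2.
Proof. by apply: diam_leq; [rewrite card_K2_vertex | exact: K2_short_walk]. Qed.

Lemma K2_dist_left (a a' : bool) : a != a' -> dist K2_adj (inl a) (inl a') = 2.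
Proof. by move=> neq; apply: (@dist_common_nbr _ _ _ _ (inr r0)); rewrite ?card_K2_vertex. Qed.

Lemma K2_dist_right (i j : 'I_b.+2) : i != j -> dist K2_adj (inr i) (inr j) = 2.
Proof. by move=> neq; apply: (@dist_common_nbr _ _ _ _ (inl false)); rewrite ?card_K2_vertex. Qed.

Lemma K2_separates (A : {set K2_vertex}) (u v : K2_vertex) :
  u != v -> separates K2_adj A u v -> A = [set u; v].
Proof.
case: u v => [a|i] [a'|j] neq sepA.
- move: sepA; apply/contraTeq => _.
  by apply: (@separates_two_common_nbrs _ _ _ _ _ (inr r0) (inr r1)); rewrite ?K2_dist_left.
- by apply: separates_adj sepA; rewrite // dist_adj ?card_K2_vertex.
- by apply: separates_adj sepA; rewrite // dist_adj ?card_K2_vertex.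
- move: sepA; apply/contraTeq => _.
  by apply: (@separates_two_common_nbrs _ _ _ _ _ (inl false) (inl true)); rewrite ?K2_dist_right.
Qed.

Lemma K2_omega' : omega' K2_adj <= 1.
Proof.
apply: omega'_leq1 => A B; apply/negP.
case/and4P => _ _ /eqP neqAB /existsP[u /existsP[v /andP[/andP[neq sepA] sepB]]].
by apply: neqAB; rewrite (K2_separates neq sepA) (K2_separates neq sepB).
Qed.

Lemma K2_src_colorable (n : nat) : src_colorable K2_adj n -> b.+2 <= n * n.
Proof.
case/src_colorableP => f rainbow.
pose colours (i : 'I_b.+2) := (f [set inl false; inr i], f [set inl true; inr i]).
have colours_inj : injective colours.
  move=> i j eq_col; apply/eqP/negPn/negP => neq.
  have [s /andP[/and3P[pth /eqP lst /eqP sz] uniq_s]] := rainbow (inr i) (inr j) neq.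
  move: sz; rewrite K2_dist_right //.
  case: s pth lst uniq_s => [|[a|k] [|v [|? ?]]] //= _ -> + _.
  rewrite !(setUC [set inr _]); case: eq_col => eq0 eq1.
  by case: a; rewrite ?eq0 ?eq1 inE eqxx.
by have := leq_card colours colours_inj; rewrite card_prod !card_ord.
Qed.

Lemma K2_card_gedges : b.+2 <= #|gedges K2_adj|.
Proof.
pose star (i : 'I_b.+2) : {set K2_vertex} := [set inl false; inr i].
have star_inj : injective star.
  move=> i j eq_star; have : inr i \in star j by rewrite -eq_star !inE eqxx orbT.
  by rewrite !inE /= => /eqP[].
rewrite -{1}(card_ord b.+2) -(card_imset _ star_inj).
apply/subset_leq_card/subsetP => A /imsetP[i _ ->]; rewrite inE.
by apply/existsP; exists (inl false); apply/existsP; exists (inr i); rewrite eqxx.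
Qed.

End CompleteBipartite.

Theorem proposition3 : forall k : nat,
  exists (T : finType) (e : rel T),
    [/\ simple_graph e, gconnected e, (exists x y : T, e x y) &
        k <= src e - maxn (diam e) (omega' e)].
Proof.
move=> k; pose b := k.+1 * k.+1.
exists (K2_vertex b), (@K2_adj b); split.
- exact: K2_simple.
- exact: K2_connected.
- by exists (inl false), (inr ord0).
have src_big : k.+2 <= src (@K2_adj b).
  apply: src_geq => [m ltmk|].
    by apply/negP => /K2_src_colorable; rewrite /b; nia.
  by have := K2_card_gedges b; rewrite /b; nia.
by have := K2_diam b; have := K2_omega' b; lia.
Qed.
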